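(* Assume $r\neq0$ and $r+s=0$. Then: (i) For $0\le i\le d-1$: $\bar b^*_i=b^*_{2i}b^*_{2i+1}$ if $0\le i\le\lfloor d/2\rfloor-1$; $\bar b^*_i=\frac{(d+1)r}{2}b^*_{d-1}$ if $i=\lfloor d/2\rfloor$ and $d$ is odd; $\bar b^*_i=\frac{(d+1)r}{2}c^*_d$ if $i=\lfloor d/2\rfloor$ and $d$ is even; $\bar b^*_i=c^*_{2(d-i)}c^*_{2(d-i)+1}$ if $\lfloor d/2\rfloor+1\le i\le d-1$. (ii) For $1\le i\le d$: $\bar c^*_i=c^*_{2i}c^*_{2i-1}$ if $1\le i\le\lfloor d/2\rfloor$; $\bar c^*_i=\frac{(d+1)r}{2}c^*_d$ if $i=\lfloor d/2\rfloor+1$ and $d$ is odd; $\bar c^*_i=\frac{(d+1)r}{2}b^*_{d-1}$ if $i=\lfloor d/2\rfloor+1$ and $d$ is even; $\bar c^*_i=b^*_{2(d-i+1)}b^*_{2(d-i)+1}$ if $\lfloor d/2\rfloor+2\le i\le d$. (iii) For $0\le i\le d$: $\bar k^*_i=k^*_{2i}$ if $0\le i\le\lfloor d/2\rfloor$, and $\bar k^*_i=k^*_{2(d-i)+1}$ if $\lfloor d/2\rfloor+1\le i\le d$.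
   Context: Fix an integer $d\ge0$ and $r,s\in(-1,\infty)$. Write $(x)_i=x(x+1)\cdots(x+i-1)$, $(x)_0=1$. Put $b^*_i=\frac{(d-i)(i-d-s)(2d-2i+r+s+2)_i}{(2d-2i+r+s)_{i+1}}$ ($0\le i\le d-1$), $c^*_i=\frac{i(i-d-r-1)(d-i+r+s+1)_{d-i}}{(d-i+r+s+2)_{d-i+1}}$ ($1\le i\le d$), $k^*_i=\frac{b^*_0\cdots b^*_{i-1}}{c^*_1\cdots c^*_i}$ ($0\le i\le d$). Put $\bar b^*_i=\frac{(d-i)(2d-2i+1)(d-2i-r-1)(d-2i-r)}{2(2d-4i-1)(2d-4i+1)}$ ($0\le i\le d-1$), $\bar c^*_i=\frac{i(2i-1)(d-2i+r+1)(d-2i+r+2)}{2(2d-4i+1)(2d-4i+3)}$ ($1\le i\le d$), and $\bar k^*_i=\frac{\bar b^*_0\cdots\bar b^*_{i-1}}{\bar c^*_1\cdots\bar c^*_i}$ ($0\le i\le d$). *)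

From mathcomp Require Import all_boot all_order all_algebra.
Set Implicit Arguments. Unset Strict Implicit. Unset Printing Implicit Defensive.
Import Order.TTheory GRing.Theory Num.Theory.
Local Open Scope ring_scope.

Definition poch {R : realFieldType} (x : R) (i : nat) : R :=
  \prod_(k < i) (x + k%:R).

Section Params.
Variables (R : realFieldType) (d : nat) (r s : R).

Definition bs (i : nat) : R :=
  (d%:R - i%:R) * (i%:R - d%:R - s) * poch (2 * d%:R - 2 * i%:R + r + s + 2) i
  / poch (2 * d%:R - 2 * i%:R + r + s) i.+1.

Definition cs (i : nat) : R :=
  i%:R * (i%:R - d%:R - r - 1) * poch (d%:R - i%:R + r + s + 1) (d - i)
  / poch (d%:R - i%:R + r + s + 2) (d - i).+1.

Definition ks (i : nat) : R :=
  (\prod_(j < i) bs j) / (\prod_(j < i) cs j.+1).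

Definition bbs (i : nat) : R :=
  (d%:R - i%:R) * (2 * d%:R - 2 * i%:R + 1) * (d%:R - 2 * i%:R - r - 1)
  * (d%:R - 2 * i%:R - r)
  / (2 * (2 * d%:R - 4 * i%:R - 1) * (2 * d%:R - 4 * i%:R + 1)).

Definition bcs (i : nat) : R :=
  i%:R * (2 * i%:R - 1) * (d%:R - 2 * i%:R + r + 1) * (d%:R - 2 * i%:R + r + 2)
  / (2 * (2 * d%:R - 4 * i%:R + 1) * (2 * d%:R - 4 * i%:R + 3)).

Definition bks (i : nat) : R :=
  (\prod_(j < i) bbs j) / (\prod_(j < i) bcs j.+1).

End Params.

(* When r + s = 0 the Pochhammer quotients in b*_i and c*_i telescope to rational closed forms
     b*_i = (i - d + r)(2d - i + 1) / (2(2d - 2i + 1)),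
     c*_i = i(i - d - r - 1) / (2(2d - 2i + 1)),
   after which (i) and (ii) are identities between rational functions of d, i and r.
   For (iii) one compares k*_{i+1} = k*_i b*_i / c*_{i+1} with the same recursion for \bar k*:
   below the middle one step of \bar k* is two steps of k*, at the middle the factor (d+1)r/2
   cancels, and above the middle the recursion of k* is run backwards, which is possible because
   -1 < r < 1 keeps every b*_i and c*_i away from 0. *)

From mathcomp Require Import all_boot all_order all_algebra.
From mathcomp Require Import ring lra zify.
Import Order.TTheory GRing.Theory Num.Theory.
Local Open Scope ring_scope.
Set Implicit Arguments. Unset Strict Implicit.

Ltac neq0_by_lra := repeat (apply/andP; split); apply/eqP => ?; lra.

Section Pochhammer.
Variable R : realFieldType.
Implicit Types (x : R) (n : nat).

Lemma poch_gt0 x n : 0 < x -> 0 < poch x n.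
Proof.
move=> x_gt0; apply: prodr_gt0 => k _.
by rewrite ltr_wpDr ?ler0n.
Qed.

Lemma poch_recr x n : poch x n.+1 = poch x n * (x + n%:R).
Proof. by rewrite /poch big_ord_recr. Qed.

Lemma poch_recl x n : poch x n.+1 = x * poch (x + 1) n.
Proof.
rewrite /poch big_ord_recl addr0; congr (_ * _).
by apply: eq_bigr => k _; rewrite /bump /= natrD addrA.
Qed.

Lemma poch_shift2_ratio x n : 0 < x ->
  poch (x + 2) n / poch x n.+1 = (x + n%:R + 1) / (x * (x + 1)).
Proof.
move=> x_gt0.
have two_steps : x * (x + 1) * poch (x + 2) n = poch x n.+1 * (x + n%:R + 1).
  by rewrite -addrA natr1 -poch_recr !poch_recl mulrA -addrA.
have poch_pos := poch_gt0 n.+1 x_gt0.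
have -> : poch (x + 2) n = poch x n.+1 * (x + n%:R + 1) / (x * (x + 1)).
  by rewrite -two_steps; field; neq0_by_lra.
field; neq0_by_lra.
Qed.

Lemma poch_shift1_ratio x n : 0 < x ->
  poch x n / poch (x + 1) n.+1 = x / ((x + n%:R) * (x + n%:R + 1)).
Proof.
move=> x_gt0.
have two_steps : x * poch (x + 1) n.+1 = poch x n * (x + n%:R) * (x + n%:R + 1).
  by rewrite -poch_recl !poch_recr -natr1 addrA.
have poch_pos := poch_gt0 n x_gt0; have n_ge0 := ler0n R n.
have -> : poch (x + 1) n.+1 = poch x n * (x + n%:R) * (x + n%:R + 1) / x.
  by rewrite -two_steps; field; neq0_by_lra.
field; neq0_by_lra.
Qed.

End Pochhammer.

Section ClosedForms.
Variables (R : realFieldType) (d : nat) (r s : R).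
Hypothesis rs0 : r + s = 0.

Lemma s_opp : s = - r.
Proof. by apply/eqP; rewrite -addr_eq0 addrC rs0. Qed.

Lemma bsE i : (i < d)%N ->
  bs d r s i =
  (i%:R - d%:R + r) * (2 * d%:R - i%:R + 1) / (2 * (2 * d%:R - 2 * i%:R + 1)).
Proof.
move=> lt_id; have i_ge0 := ler0n R i; have : i%:R < d%:R :> R by rewrite ltr_nat.
move=> lt_idR; rewrite /bs s_opp -mulrA poch_shift2_ratio; last lra.
field; neq0_by_lra.
Qed.

Lemma csE i : (i <= d)%N ->
  cs d r s i = i%:R * (i%:R - d%:R - r - 1) / (2 * (2 * d%:R - 2 * i%:R + 1)).
Proof.
move=> le_id; have i_ge0 := ler0n R i; have : i%:R <= d%:R :> R by rewrite ler_nat.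
move=> le_idR; rewrite /cs s_opp.
have -> : d%:R - i%:R + r + - r + 2 = d%:R - i%:R + r + - r + 1 + 1 by ring.
rewrite -mulrA poch_shift1_ratio ?natrB //; last lra.
field; neq0_by_lra.
Qed.

Lemma bs_neq0 i : r < 1 -> (i < d)%N -> bs d r s i != 0.
Proof.
move=> r_lt1 lt_id; have : i%:R + 1 <= d%:R :> R by rewrite natr1 ler_nat.
have i_ge0 := ler0n R i.
by move=> lt_idR; rewrite bsE // !mulf_eq0 !invr_eq0 !mulf_eq0 !negb_or; neq0_by_lra.
Qed.

Lemma cs_neq0 i : -1 < r -> (0 < i <= d)%N -> cs d r s i != 0.
Proof.
move=> r_gtN1 /andP[i_gt0 le_id].
have : 1 <= i%:R :> R by rewrite ler1n.
have : i%:R <= d%:R :> R by rewrite ler_nat.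
by move=> le_idR i_ge1; rewrite csE // !mulf_eq0 !invr_eq0 !mulf_eq0 !negb_or; neq0_by_lra.
Qed.

End ClosedForms.

Section Factorization.
Variables (R : realFieldType) (d : nat) (r s : R).
Hypothesis rs0 : r + s = 0.

Lemma bbs_lower i : (i < d./2)%N ->
  bbs d r i = bs d r s (2 * i) * bs d r s (2 * i).+1.
Proof.
move=> lt_i_half; rewrite !bsE //; try lia.
have i_ge0 := ler0n R i; have : (2 * i + 2)%:R <= d%:R :> R by rewrite ler_nat; lia.
by move=> le_d; rewrite /bbs; field; neq0_by_lra.
Qed.

Lemma bbs_half_odd i : d = (2 * i).+1 ->
  bbs d r i = d.+1%:R * r / 2 * bs d r s d.-1.
Proof.
move=> ->; rewrite bsE //=.
have i_ge0 := ler0n R i.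
by rewrite /bbs; field; neq0_by_lra.
Qed.

Lemma bbs_half_even i : d = (2 * i)%N ->
  bbs d r i = d.+1%:R * r / 2 * cs d r s d.
Proof.
move=> ->; rewrite csE //.
have i_ge0 := ler0n R i.
by rewrite /bbs; field; neq0_by_lra.
Qed.

Lemma bbs_upper i : (d./2 + 1 <= i)%N -> (i < d)%N ->
  bbs d r i = cs d r s (2 * (d - i)) * cs d r s (2 * (d - i)).+1.
Proof.
move=> half_lt_i lt_id.
have [j d_eq] : exists j, d = (i + j)%N by exists (d - i)%N; lia.
subst d; rewrite addKn !csE //; try lia.
have j_ge0 := ler0n R j; have : j.+1%:R <= i%:R :> R by rewrite ler_nat; lia.
by move=> le_ji; rewrite /bbs; field; neq0_by_lra.
Qed.

Lemma bcs_lower i : (0 < i)%N -> (i <= d./2)%N ->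
  bcs d r i = cs d r s (2 * i) * cs d r s (2 * i).-1.
Proof.
case: i => // i _ le_i_half.
have -> : (2 * i.+1).-1 = (2 * i).+1 by lia.
rewrite !csE //; try lia.
have i_ge0 := ler0n R i; have : (2 * i + 2)%:R <= d%:R :> R by rewrite ler_nat; lia.
by move=> le_d; rewrite /bcs; field; neq0_by_lra.
Qed.

Lemma bcs_half_odd i : d = (2 * i).+1 ->
  bcs d r i.+1 = d.+1%:R * r / 2 * cs d r s d.
Proof.
move=> ->; rewrite csE //.
have i_ge0 := ler0n R i.
by rewrite /bcs; field; neq0_by_lra.
Qed.

Lemma bcs_half_even i : (0 < i)%N -> d = (2 * i)%N ->
  bcs d r i.+1 = d.+1%:R * r / 2 * bs d r s d.-1.
Proof.
case: i => // i _ ->; have -> : (2 * i.+1).-1 = (2 * i).+1 by lia.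
rewrite bsE //; last lia.
have i_ge0 := ler0n R i.
by rewrite /bcs; field; neq0_by_lra.
Qed.

Lemma bcs_upper i : (d./2 + 2 <= i)%N -> (i <= d)%N ->
  bcs d r i = bs d r s (2 * (d - i + 1)) * bs d r s (2 * (d - i)).+1.
Proof.
move=> half_lt_i le_id.
have [j d_eq] : exists j, d = (i + j)%N by exists (d - i)%N; lia.
subst d; rewrite addKn !bsE //; try lia.
have j_ge0 := ler0n R j; have : j.+3%:R <= i%:R :> R by rewrite ler_nat; lia.
by move=> le_ji; rewrite /bcs; field; neq0_by_lra.
Qed.

End Factorization.

Section Ratios.
Variables (R : realFieldType) (d : nat) (r s : R).
Hypotheses (rs0 : r + s = 0) (r_gtN1 : -1 < r) (r_lt1 : r < 1) (r_neq0 : r != 0).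

Lemma ks_recr i : ks d r s i.+1 = ks d r s i * (bs d r s i / cs d r s i.+1).
Proof. by rewrite /ks !big_ord_recr -mulf_div. Qed.

Lemma bks_recr i : bks d r i.+1 = bks d r i * (bbs d r i / bcs d r i.+1).
Proof. by rewrite /bks !big_ord_recr -mulf_div. Qed.

Lemma ks_recr_inv i : bs d r s i != 0 -> cs d r s i.+1 != 0 ->
  ks d r s i = ks d r s i.+1 * (cs d r s i.+1 / bs d r s i).
Proof. by move=> bs_neq0 cs_neq0; rewrite ks_recr; field; apply/andP. Qed.

Lemma bks_lower i : (i <= d./2)%N -> bks d r i = ks d r s (2 * i).
Proof.
elim: i => [|i IH] le_i_half; first by rewrite /bks /ks muln0 !big_ord0.
rewrite bks_recr IH; last lia.
rewrite (bbs_lower rs0) ?(bcs_lower rs0); try lia.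
have -> : (2 * i.+1 = (2 * i).+2)%N by lia.
by rewrite !ks_recr /= invfM; ring.
Qed.

Lemma bks_half_succ : (0 < d)%N ->
  bks d r (d./2).+1 = ks d r s (2 * (d - (d./2).+1)).+1.
Proof.
move=> d_gt0; rewrite bks_recr bks_lower //.
have K_neq0 : d.+1%:R * r / 2 != 0 :> R.
  by rewrite !mulf_neq0 ?invr_neq0 ?pnatr_eq0.
have cs_d_neq0 : cs d r s d != 0 by rewrite cs_neq0 // d_gt0 leqnn.
case/boolP: (odd d) => [d_odd | d_even].
  have d_eq : d = (2 * d./2).+1 by lia.
  rewrite (bbs_half_odd rs0) // (bcs_half_odd rs0) //.
  have -> : (2 * (d - (d./2).+1)).+1 = (2 * d./2).+1 by lia.
  have -> : d.-1 = (2 * d./2)%N by lia.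
  by rewrite ks_recr -d_eq; field; rewrite cs_d_neq0 r_neq0 nat1r pnatr_eq0.
have d_eq : d = (2 * d./2)%N by lia.
rewrite (bbs_half_even rs0) // (bcs_half_even rs0) //; last lia.
have -> : (2 * (d - (d./2).+1)).+1 = d.-1 by lia.
have bs_pred_neq0 : bs d r s d.-1 != 0 by rewrite bs_neq0 //; lia.
have cs_succ_neq0 : cs d r s d.-1.+1 != 0 by rewrite prednK.
rewrite -d_eq (ks_recr_inv bs_pred_neq0 cs_succ_neq0) prednK //.
by field; rewrite bs_pred_neq0 r_neq0 nat1r pnatr_eq0.
Qed.

Lemma bks_upper i : (d./2 < i <= d)%N -> bks d r i = ks d r s (2 * (d - i)).+1.
Proof.
elim: i => [//|i IH] /andP[lt_half_Si le_id].
have [le_i_half | lt_half_i] := leqP i d./2.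
  have -> : i = d./2 by lia.
  by rewrite bks_half_succ //; lia.
rewrite bks_recr IH; last lia.
rewrite (bbs_upper rs0) ?(bcs_upper rs0); try lia.
have [j d_sub] : exists j, (d - i = j.+1)%N by exists (d - i.+1)%N; lia.
have -> : (d - i.+1 = j)%N by lia.
rewrite d_sub addn1 (_ : (2 * j.+1 = (2 * j).+2)%N); last lia.
have bs1 : bs d r s (2 * j).+1 != 0 by rewrite bs_neq0 //; lia.
have bs2 : bs d r s (2 * j).+2 != 0 by rewrite bs_neq0 //; lia.
have cs2 : cs d r s (2 * j).+2 != 0 by rewrite cs_neq0 //; lia.
have cs3 : cs d r s (2 * j).+3 != 0 by rewrite cs_neq0 //; lia.
rewrite (ks_recr_inv bs1 cs2) (ks_recr_inv bs2 cs3).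
by field; rewrite bs1 bs2.
Qed.

End Ratios.

Theorem lemma3p3 (R : realFieldType) (d : nat) (r s : R)
  (hr : -1 < r) (hs : -1 < s) (hr0 : r != 0) (hrs : r + s = 0) :
  let K := (d.+1)%:R * r / 2 in
  (* (i) *)
  [/\ (forall i : nat, (i < d./2)%N ->
          bbs d r i = bs d r s (2 * i) * bs d r s (2 * i).+1),
      (forall i : nat, i = d./2 -> (i < d)%N -> odd d ->
          bbs d r i = K * bs d r s d.-1),
      (forall i : nat, i = d./2 -> (i < d)%N -> ~~ odd d ->
          bbs d r i = K * cs d r s d),
      (forall i : nat, (d./2 + 1 <= i)%N -> (i < d)%N ->
          bbs d r i = cs d r s (2 * (d - i)) * cs d r s (2 * (d - i)).+1)
  &
  (* (ii) *)
  [/\ (forall i : nat, (1 <= i)%N -> (i <= d./2)%N ->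
          bcs d r i = cs d r s (2 * i) * cs d r s (2 * i).-1),
      (forall i : nat, i = (d./2).+1 -> (i <= d)%N -> odd d ->
          bcs d r i = K * cs d r s d),
      (forall i : nat, i = (d./2).+1 -> (i <= d)%N -> ~~ odd d ->
          bcs d r i = K * bs d r s d.-1),
      (forall i : nat, (d./2 + 2 <= i)%N -> (i <= d)%N ->
          bcs d r i = bs d r s (2 * (d - i + 1)) * bs d r s (2 * (d - i)).+1)
  &
  (* (iii) *)
  (forall i : nat, (i <= d)%N ->
     ((i <= d./2)%N -> bks d r i = ks d r s (2 * i)) /\
     ((d./2 + 1 <= i)%N -> bks d r i = ks d r s (2 * (d - i)).+1))]].
Proof.
move=> K; rewrite {}/K.
have r_lt1 : r < 1 by lra.
split; last split.
- by move=> i; apply: bbs_lower.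
- by move=> i -> _ d_odd; apply: bbs_half_odd => //; lia.
- by move=> i -> _ d_even; apply: bbs_half_even => //; lia.
- by move=> i; apply: bbs_upper.
- by move=> i; apply: bcs_lower.
- by move=> i -> _ d_odd; apply: bcs_half_odd => //; lia.
- by move=> i -> le_id d_even; apply: bcs_half_even => //; lia.
- by move=> i; apply: bcs_upper.
- move=> i le_id; split => [le_i_half | lt_half_i]; first exact: bks_lower.
  by apply: bks_upper => //; lia.
Qed.
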